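(* Let $\gamma<\delta$, $c>0$, $g(t)=c(\delta-t)$ on $[\gamma,\delta]$, and let $0<\alpha<\beta$. Let $s\in(\gamma,\delta)$ and let $\varphi:[\gamma,\delta]\to[0,\infty)$ be a concave function with $\varphi(t)>0$ for all $t\in[\gamma,s]$. Then \[\frac{\int_\gamma^{s} t\,\varphi(t)^{\alpha-\beta}g(t)^\beta\,dt}{\int_\gamma^{s} \varphi(t)^{\alpha-\beta}g(t)^\beta\,dt}\leq\frac{\int_\gamma^{s} t\,(\delta-t)^{\alpha-\beta}g(t)^\beta\,dt}{\int_\gamma^{s} (\delta-t)^{\alpha-\beta}g(t)^\beta\,dt}=\frac{\int_\gamma^{s} t\,(\delta-t)^{\alpha}\,dt}{\int_\gamma^{s} (\delta-t)^{\alpha}\,dt}.\] *)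

From Stdlib Require Import Reals.
From Coquelicot Require Import Coquelicot.
Open Scope R_scope.

Definition concave_on (a b : R) (phi : R -> R) : Prop :=
  forall x y l, a <= x <= b -> a <= y <= b -> 0 <= l <= 1 ->
    l * phi x + (1 - l) * phi y <= phi (l * x + (1 - l) * y).

From Stdlib Require Import Reals Lra Classical.
From Coquelicot Require Import Coquelicot.
Open Scope R_scope.
(* The chord inequality at the points t < u < delta, together with phi(delta) >= 0,
   shows that phi(t) / (delta - t) is nondecreasing on [gamma, s]. Hence on (gamma, s]
   the weight phi^(alpha-beta) g^beta is the reference weight (delta - t)^(alpha-beta) g^beta
   multiplied by the nonincreasing factor (phi(t) / (delta - t))^(alpha-beta), and by
   Chebyshev's integral inequality such a factor can only lower the barycentre. The
   equality holds because the reference weight is c^beta (delta - t)^alpha. For the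
   integrals to exist one uses that a concave function is continuous inside its interval
   and has a right limit at gamma, which is at least min(phi gamma, phi s) > 0. *)


Lemma Rdiv_le_cross p q r u : 0 < q -> 0 < u -> p * u <= r * q -> p / q <= r / u.
Proof.
intros Hq Hu H. apply (Rmult_le_reg_r (q * u)); [nra|].
replace (p / q * (q * u)) with (p * u) by (field; lra).
replace (r / u * (q * u)) with (r * q) by (field; lra).
exact H.
Qed.

Lemma Rpower_gt_0 x y : 0 < Rpower x y.
Proof. apply exp_pos. Qed.

Lemma Rpower_le_nonpos e x y : e <= 0 -> 0 < x <= y -> Rpower y e <= Rpower x e.
Proof.
intros He Hxy.
replace e with (- - e) by ring. rewrite (Rpower_Ropp y), (Rpower_Ropp x).
apply Rinv_le_contravar; [apply Rpower_gt_0|].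
apply Rle_Rpower_l; lra.
Qed.

Lemma continuous_of_eps_delta (f : R -> R) x :
  (forall eps, 0 < eps -> exists d, 0 < d /\
     forall y, Rabs (y - x) < d -> Rabs (f y - f x) < eps) ->
  continuous f x.
Proof.
intros H. apply continuity_pt_filterlim.
intros eps Heps. destruct (H eps Heps) as [d [Hd Hf]].
exists d; split; [exact Hd|]. intros y [_ Hy]. exact (Hf y Hy).
Qed.

Lemma continuous_Rpower_comp (f : R -> R) e z :
  continuous f z -> 0 < f z -> continuous (fun t => Rpower (f t) e) z.
Proof.
intros Hf Hp. apply (continuous_comp f (fun x => Rpower x e)); [exact Hf|].
apply (@ex_derive_continuous R_AbsRing R_NormedModule).
exists (e * Rpower (f z) (e - 1)).
apply is_derive_Reals, derivable_pt_lim_power, Hp.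
Qed.

Definition right_limit (f : R -> R) (a l : R) : Prop :=
  forall eps, 0 < eps -> exists eta, 0 < eta /\
    forall t, a < t < a + eta -> Rabs (f t - l) < eps.

Lemma antitone_bounded_right_limit (f : R -> R) a b M : a < b ->
  (forall x y, a < x <= y -> y < b -> f y <= f x) ->
  (forall x, a < x < b -> f x <= M) ->
  exists L, right_limit f a L.
Proof.
intros Hab Hmon HM.
set (E := fun y => exists t, a < t < b /\ y = f t).
assert (HE : exists y, E y) by (exists (f ((a + b) / 2)), ((a + b) / 2); split; [lra|easy]).
assert (Hbound : bound E) by (exists M; intros y [t [Ht ->]]; apply HM, Ht).
destruct (completeness E Hbound HE) as [L [Hub Hleast]].
exists L. intros eps Heps.
assert (Happrox : exists t0, a < t0 < b /\ L - eps < f t0).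
{ apply NNPP. intros Hn.
  assert (L <= L - eps); [|lra].
  apply Hleast. intros y [t [Ht ->]]. apply Rnot_lt_le. intros Hlt.
  apply Hn. exists t. split; assumption. }
destruct Happrox as [t0 [Ht0 Hf0]].
exists (t0 - a). split; [lra|]. intros t Ht.
assert (f t <= L) by (apply Hub; exists t; split; [lra|easy]).
assert (f t0 <= f t) by (apply Hmon; lra).
apply Rabs_def1; lra.
Qed.

Lemma right_limit_linear_sub (f : R -> R) a L k :
  right_limit (fun t => k * t - f t) a L -> right_limit f a (k * a - L).
Proof.
intros HL eps Heps.
destruct (HL (eps / 2) ltac:(lra)) as [eta [Heta Ht]].
set (r := eps / (2 * (Rabs k + 1))).
pose proof (Rabs_pos k).
assert (Hr : 0 < r) by (apply Rdiv_lt_0_compat; lra).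
assert (Hrk : r * (2 * (Rabs k + 1)) = eps) by (unfold r; field; lra).
exists (Rmin eta r). split; [apply Rmin_pos; lra|]. intros t Hta.
pose proof (Rmin_l eta r) as Heta_min. pose proof (Rmin_r eta r) as Hr_min.
specialize (Ht t ltac:(lra)).
replace (f t - (k * a - L)) with (k * (t - a) - (k * t - f t - L)) by ring.
apply (Rle_lt_trans _ _ _ (Rabs_triang _ _)). rewrite Rabs_Ropp, Rabs_mult.
rewrite (Rabs_right (t - a)) by lra.
nra.
Qed.

Lemma right_limit_ge (f : R -> R) a l m r : 0 < r ->
  (forall t, a < t < a + r -> m <= f t) -> right_limit f a l -> m <= l.
Proof.
intros Hr Hm Hl. apply Rnot_lt_le. intros Hlt.
destruct (Hl (m - l) ltac:(lra)) as [eta [Heta Ht]].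
set (t := a + Rmin eta r / 2).
pose proof (Rmin_l eta r). pose proof (Rmin_r eta r).
assert (0 < Rmin eta r) by (apply Rmin_pos; lra).
specialize (Ht t ltac:(unfold t; lra)).
pose proof (Hm t ltac:(unfold t; lra)).
apply Rabs_def2 in Ht. lra.
Qed.

Lemma continuous_glue_right_limit (f : R -> R) a l : right_limit f a l ->
  continuous (fun t => if Rle_dec t a then l else f t) a.
Proof.
intros Hl. apply continuous_of_eps_delta. intros eps Heps.
destruct (Hl eps Heps) as [eta [Heta Ht]].
exists eta. split; [exact Heta|]. intros y Hy.
destruct (Rle_dec a a) as [_|]; [|lra].
destruct (Rle_dec y a).
- rewrite Rminus_diag, Rabs_R0. exact Heps.
- apply Ht. apply Rabs_def2 in Hy. lra.
Qed.

Lemma continuous_of_local_lipschitz (f : R -> R) x r K : 0 < r -> 0 <= K ->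
  (forall y, Rabs (y - x) < r -> Rabs (f y - f x) <= K * Rabs (y - x)) ->
  continuous f x.
Proof.
intros Hr HK Hlip. apply continuous_of_eps_delta. intros eps Heps.
set (d := eps / (K + 1)).
assert (Hd : 0 < d) by (apply Rdiv_lt_0_compat; lra).
assert (HdK : d * (K + 1) = eps) by (unfold d; field; lra).
exists (Rmin r d). split; [apply Rmin_pos; lra|]. intros y Hy.
pose proof (Rmin_l r d). pose proof (Rmin_r r d).
pose proof (Rabs_pos (y - x)).
apply (Rle_lt_trans _ _ _ (Hlip y ltac:(lra))).
nra.
Qed.

Definition slope (f : R -> R) (x y : R) : R := (f y - f x) / (y - x).

Section Concave.

Variables (a b : R) (phi : R -> R).
Hypothesis Hconc : concave_on a b phi.

Lemma concave_chord x y z : a <= x -> x <= y -> y <= z -> z <= b ->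
  (z - y) * phi x + (y - x) * phi z <= (z - x) * phi y.
Proof.
intros Hax Hxy Hyz Hzb.
destruct (Req_dec x z) as [<-|Hxz].
{ replace y with x by lra. lra. }
set (l := (z - y) / (z - x)).
assert (Hl : 0 <= l <= 1).
{ unfold l. split.
  - apply Rmult_le_pos; [lra|]. apply Rlt_le, Rinv_0_lt_compat; lra.
  - apply (Rmult_le_reg_r (z - x)); [lra|].
    unfold Rdiv. rewrite Rmult_assoc, Rinv_l by lra. lra. }
pose proof (Hconc x z l ltac:(lra) ltac:(lra) Hl) as H.
replace (l * x + (1 - l) * z) with y in H by (unfold l; field; lra).
apply (Rmult_le_compat_l (z - x)) in H; [|lra].
replace ((z - x) * (l * phi x + (1 - l) * phi z))
  with ((z - y) * phi x + (y - x) * phi z) in H by (unfold l; field; lra).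
exact H.
Qed.

Lemma concave_slope_left x y z : a <= x < y -> y <= z <= b ->
  slope phi x z <= slope phi x y.
Proof.
intros Hxy Hyz. pose proof (concave_chord x y z ltac:(lra) ltac:(lra) ltac:(lra) ltac:(lra)).
apply Rdiv_le_cross; lra.
Qed.

Lemma concave_slope_right x y z : a <= x <= y -> y < z <= b ->
  slope phi y z <= slope phi x z.
Proof.
intros Hxy Hyz. pose proof (concave_chord x y z ltac:(lra) ltac:(lra) ltac:(lra) ltac:(lra)).
apply Rdiv_le_cross; lra.
Qed.

Lemma concave_slope_bounds x y : a < x < b -> a <= y <= b -> y <> x ->
  slope phi x b <= slope phi x y <= slope phi a x.
Proof.
intros Hx Hy Hyx.
destruct (Rlt_or_le x y) as [Hlt|Hle].
- pose proof (concave_slope_left x y b ltac:(lra) ltac:(lra)).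
  pose proof (concave_slope_right a x y ltac:(lra) ltac:(lra)).
  pose proof (concave_slope_left a x y ltac:(lra) ltac:(lra)).
  lra.
- replace (slope phi x y) with (slope phi y x) by (unfold slope; field; lra).
  pose proof (concave_slope_right a y x ltac:(lra) ltac:(lra)).
  pose proof (concave_slope_right y x b ltac:(lra) ltac:(lra)).
  pose proof (concave_slope_left y x b ltac:(lra) ltac:(lra)).
  lra.
Qed.

Lemma concave_continuous x : a < x < b -> continuous phi x.
Proof.
intros Hx.
set (K := Rabs (slope phi x b) + Rabs (slope phi a x)).
pose proof (Rabs_pos (slope phi x b)). pose proof (Rabs_pos (slope phi a x)).
pose proof (Rmin_l (x - a) (b - x)). pose proof (Rmin_r (x - a) (b - x)).
apply (continuous_of_local_lipschitz _ x (Rmin (x - a) (b - x)) K);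
  [apply Rmin_pos; lra | unfold K; lra |].
intros y Hy. apply Rabs_def2 in Hy.
destruct (Req_dec y x) as [->|Hyx].
{ rewrite !Rminus_diag, Rabs_R0. lra. }
replace (phi y - phi x) with (slope phi x y * (y - x)) by (unfold slope; field; lra).
rewrite Rabs_mult. apply Rmult_le_compat_r; [apply Rabs_pos|].
pose proof (concave_slope_bounds x y Hx ltac:(lra) Hyx).
unfold K, Rabs; repeat destruct Rcase_abs; lra.
Qed.

Lemma concave_ge_min x y t : a <= x <= t -> t <= y <= b ->
  Rmin (phi x) (phi y) <= phi t.
Proof.
intros Hxt Hty.
pose proof (concave_chord x t y ltac:(lra) ltac:(lra) ltac:(lra) ltac:(lra)).
pose proof (Rmin_l (phi x) (phi y)). pose proof (Rmin_r (phi x) (phi y)).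
destruct (Req_dec x y) as [<-|Hxy].
- replace t with x by lra. lra.
- apply (Rmult_le_reg_l (y - x)); [lra|]. nra.
Qed.

Lemma concave_div_dist_le x y : 0 <= phi b -> a <= x <= y -> y < b ->
  phi x / (b - x) <= phi y / (b - y).
Proof.
intros Hb Hxy Hy.
pose proof (concave_chord x y b ltac:(lra) ltac:(lra) ltac:(lra) ltac:(lra)).
apply Rdiv_le_cross; nra.
Qed.

Lemma concave_right_limit s : a < s < b ->
  exists l, Rmin (phi a) (phi s) <= l /\ right_limit phi a l.
Proof.
intros Hs.
set (mu := slope phi s b).
set (m0 := Rmin (phi a) (phi s)).
assert (Hge : forall t, a <= t <= s -> m0 <= phi t)
  by (intros t Ht; apply concave_ge_min; lra).
(* slopes inside (a, s) are at least [mu], so [mu t - phi t] is nonincreasing there *)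
assert (Hmon : forall x y, a < x <= y -> y < s -> mu * y - phi y <= mu * x - phi x).
{ intros x y Hxy Hy. destruct (Req_dec x y) as [<-|Hne]; [lra|].
  pose proof (concave_slope_left x y b ltac:(lra) ltac:(lra)).
  pose proof (concave_slope_right x s b ltac:(lra) ltac:(lra)).
  assert (mu * (y - x) <= slope phi x y * (y - x)) by (apply Rmult_le_compat_r; unfold mu; lra).
  replace (phi y) with (phi x + slope phi x y * (y - x)) by (unfold slope; field; lra).
  lra. }
assert (Hbound : forall t, a < t < s -> mu * t - phi t <= Rmax (mu * a) (mu * s) - m0).
{ intros t Ht. pose proof (Hge t ltac:(lra)).
  pose proof (Rmax_l (mu * a) (mu * s)). pose proof (Rmax_r (mu * a) (mu * s)).
  destruct (Rle_or_lt 0 mu); nra. }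
destruct (antitone_bounded_right_limit (fun t => mu * t - phi t) a s _
  ltac:(lra) Hmon Hbound) as [L HL].
apply right_limit_linear_sub in HL.
exists (mu * a - L). split; [|exact HL].
apply (right_limit_ge phi a _ m0 (s - a)); [lra | intros t Ht; apply Hge; lra | exact HL].
Qed.

Lemma concave_continuous_extension s : a < s < b ->
  exists psi, (forall t, a < t -> psi t = phi t) /\
    Rmin (phi a) (phi s) <= psi a /\
    forall z, a <= z <= s -> continuous psi z.
Proof.
intros Hs.
destruct (concave_right_limit s Hs) as [l [Hl Hlim]].
exists (fun t => if Rle_dec t a then l else phi t).
split; [|split].
- intros t Ht. destruct (Rle_dec t a); [lra|reflexivity].
- destruct (Rle_dec a a); [exact Hl|lra].
- intros z Hz. destruct (Req_dec z a) as [->|Hza].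
  + apply continuous_glue_right_limit, Hlim.
  + apply (continuous_ext_loc _ phi).
    * apply (filter_imp (fun y => a < y)); [|apply open_gt; lra].
      intros y Hy. destruct (Rle_dec y a); [lra|reflexivity].
    * apply concave_continuous. lra.
Qed.

End Concave.

Lemma antitone_cross_sign (h : R -> R) a b m : a <= b ->
  (forall x y, a <= x <= y -> y <= b -> h y <= h x) ->
  exists K, forall t, a <= t <= b -> (t - m) * (h t - K) <= 0.
Proof.
intros Hab Hmon.
pose proof (Rmax_l a (Rmin m b)). pose proof (Rmax_r a (Rmin m b)).
pose proof (Rmin_l m b). pose proof (Rmin_r m b).
set (cm := Rmax a (Rmin m b)) in *.
assert (Hcm : a <= cm <= b) by (split; [lra|apply Rmax_lub; lra]).
exists (h cm). intros t Ht.
destruct (Rle_or_lt m t) as [Hmt|Hmt].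
- assert (cm <= t) by (apply Rmax_lub; lra).
  assert (h t <= h cm) by (apply Hmon; lra). nra.
- assert (t <= Rmin m b) by (apply Rmin_glb; lra).
  assert (h cm <= h t) by (apply Hmon; lra). nra.
Qed.

Lemma RInt_ext_open (f g : R -> R) a b : a <= b ->
  (forall t, a < t < b -> f t = g t) -> RInt f a b = RInt g a b.
Proof. intros Hab H. apply RInt_ext. rewrite Rmin_left, Rmax_right by lra. exact H. Qed.

Lemma RInt_barycentre_antitone (h w : R -> R) a b : a <= b ->
  (forall x y, a <= x <= y -> y <= b -> h y <= h x) ->
  (forall t, a < t < b -> 0 <= w t) ->
  ex_RInt w a b -> ex_RInt (fun t => t * w t) a b ->
  ex_RInt (fun t => h t * w t) a b -> ex_RInt (fun t => t * (h t * w t)) a b ->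
  0 < RInt w a b -> 0 < RInt (fun t => h t * w t) a b ->
  RInt (fun t => t * (h t * w t)) a b / RInt (fun t => h t * w t) a b
    <= RInt (fun t => t * w t) a b / RInt w a b.
Proof.
intros Hab Hmon Hw Iw Itw Ihw Ithw Pw Phw.
set (m := RInt (fun t => t * w t) a b / RInt w a b).
destruct (antitone_cross_sign h a b m Hab Hmon) as [K HK].
assert (Hle : RInt (fun t => t * (h t * w t)) a b - m * RInt (fun t => h t * w t) a b
  <= K * (RInt (fun t => t * w t) a b - m * RInt w a b)).
{ pose proof (RInt_correct (V := R_CompleteNormedModule) _ _ _ Ithw) as I1.
  pose proof (RInt_correct (V := R_CompleteNormedModule) _ _ _ Ihw) as I2.
  pose proof (RInt_correct (V := R_CompleteNormedModule) _ _ _ Itw) as I3.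
  pose proof (RInt_correct (V := R_CompleteNormedModule) _ _ _ Iw) as I4.
  apply (is_RInt_le _ _ a b _ _ Hab (is_RInt_minus _ _ _ _ _ _ I1 (is_RInt_scal _ _ _ m _ I2))
    (is_RInt_scal _ _ _ K _ (is_RInt_minus _ _ _ _ _ _ I3 (is_RInt_scal _ _ _ m _ I4)))).
  intros t Ht. pose proof (HK t ltac:(lra)). pose proof (Hw t Ht).
  change (t * (h t * w t) - m * (h t * w t) <= K * (t * w t - m * w t)). nra. }
replace (RInt (fun t => t * w t) a b - m * RInt w a b) with 0 in Hle
  by (unfold m; field; lra).
apply (Rmult_le_reg_r (RInt (fun t => h t * w t) a b)); [exact Phw|].
unfold Rdiv at 1. rewrite Rmult_assoc, Rinv_l by lra. fold m. lra.
Qed.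

Lemma RInt_facts_of_continuous_pos (w f : R -> R) a b : a < b ->
  (forall z, a <= z <= b -> continuous f z /\ 0 < f z) ->
  (forall t, a < t < b -> w t = f t) ->
  ex_RInt w a b /\ ex_RInt (fun t => t * w t) a b /\ 0 < RInt w a b.
Proof.
intros Hab Hf Hwf.
assert (Hcont : forall z, Rmin a b <= z <= Rmax a b -> continuous f z)
  by (rewrite Rmin_left, Rmax_right by lra; intros z Hz; apply Hf, Hz).
split; [|split].
- apply (ex_RInt_ext f); [rewrite Rmin_left, Rmax_right by lra; intros t Ht; symmetry; apply Hwf, Ht|].
  apply (ex_RInt_continuous (V := R_CompleteNormedModule)), Hcont.
- apply (ex_RInt_ext (fun t => t * f t)).
  { rewrite Rmin_left, Rmax_right by lra. intros t Ht. rewrite Hwf by exact Ht. reflexivity. }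
  apply (ex_RInt_continuous (V := R_CompleteNormedModule)). intros z Hz.
  apply (@continuous_mult R_UniformSpace R_AbsRing); [apply continuous_id | apply Hcont, Hz].
- rewrite (RInt_ext w f) by (rewrite Rmin_left, Rmax_right by lra; exact Hwf).
  apply RInt_gt_0; [exact Hab | intros t Ht; apply Hf; lra | intros z Hz; apply Hf, Hz].
Qed.

Lemma Rpower_sub_mul_scaled k x p q : 0 < k -> 0 < x ->
  Rpower x (p - q) * Rpower (k * x) q = Rpower k q * Rpower x p.
Proof.
intros Hk Hx. rewrite <- Rpower_mult_distr by lra.
rewrite Rmult_comm, Rmult_assoc, <- Rpower_plus.
do 2 f_equal. ring.
Qed.

Section Barycentre.

Variables (gamma delta c alpha beta s : R) (g phi : R -> R).
Hypothesis Hc : 0 < c.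
Hypothesis Hg : forall t, gamma <= t <= delta -> g t = c * (delta - t).
Hypothesis Hab : alpha < beta.
Hypothesis Hs : gamma < s < delta.
Hypothesis Hdelta : 0 <= phi delta.
Hypothesis Hconc : concave_on gamma delta phi.
Hypothesis Hpos : forall t, gamma <= t <= s -> 0 < phi t.

Definition reference_weight t := Rpower (delta - t) (alpha - beta) * Rpower (g t) beta.

Definition concavity_factor t := Rpower (phi t / (delta - t)) (alpha - beta).

Lemma reference_weight_eq t : gamma <= t < delta ->
  reference_weight t = Rpower c beta * Rpower (delta - t) alpha.
Proof.
intros Ht. unfold reference_weight. rewrite Hg by lra.
apply Rpower_sub_mul_scaled; lra.
Qed.

Lemma weight_factorization t : gamma <= t <= s ->
  Rpower (phi t) (alpha - beta) * Rpower (g t) beta = concavity_factor t * reference_weight t.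
Proof.
intros Ht. pose proof (Hpos t Ht).
unfold concavity_factor, reference_weight.
rewrite <- Rmult_assoc, Rpower_mult_distr by (try apply Rdiv_lt_0_compat; lra).
do 3 f_equal. field. lra.
Qed.

Lemma concavity_factor_antitone x y : gamma <= x <= y -> y <= s ->
  concavity_factor y <= concavity_factor x.
Proof.
intros Hxy Hy. apply Rpower_le_nonpos; [lra|]. split.
- apply Rdiv_lt_0_compat; [apply Hpos|]; lra.
- apply (concave_div_dist_le gamma delta phi Hconc); lra.
Qed.

Lemma continuous_dist_power e z : z < delta ->
  continuous (fun t => Rpower (delta - t) e) z.
Proof.
intros Hz. apply continuous_Rpower_comp; [|lra].
apply (@ex_derive_continuous R_AbsRing R_NormedModule). auto_derive. trivial.
Qed.

Lemma dist_power_facts e :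
  ex_RInt (fun t => Rpower (delta - t) e) gamma s /\
  ex_RInt (fun t => t * Rpower (delta - t) e) gamma s /\
  0 < RInt (fun t => Rpower (delta - t) e) gamma s.
Proof.
apply (RInt_facts_of_continuous_pos _ (fun t => Rpower (delta - t) e)); [lra| |easy].
intros z Hz. split; [apply continuous_dist_power; lra | apply Rpower_gt_0].
Qed.

Lemma reference_weight_facts :
  ex_RInt reference_weight gamma s /\
  ex_RInt (fun t => t * reference_weight t) gamma s /\
  0 < RInt reference_weight gamma s.
Proof.
apply (RInt_facts_of_continuous_pos _ (fun t => Rpower c beta * Rpower (delta - t) alpha));
  [lra| |intros t Ht; apply reference_weight_eq; lra].
intros z Hz. split.
- apply (@continuous_mult R_UniformSpace R_AbsRing);
    [apply continuous_const | apply continuous_dist_power; lra].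
- apply Rmult_lt_0_compat; apply Rpower_gt_0.
Qed.

(* [phi] may jump down at [gamma]; integrability comes from its continuous modification there. *)
Lemma weighted_facts :
  ex_RInt (fun t => concavity_factor t * reference_weight t) gamma s /\
  ex_RInt (fun t => t * (concavity_factor t * reference_weight t)) gamma s /\
  0 < RInt (fun t => concavity_factor t * reference_weight t) gamma s.
Proof.
destruct (concave_continuous_extension gamma delta phi Hconc s Hs)
  as [psi [Hpsi [Hpsi_gamma Hpsi_cont]]].
assert (Hpsi_pos : forall z, gamma <= z <= s -> 0 < psi z).
{ intros z Hz. destruct (Req_dec z gamma) as [->|Hne].
  - pose proof (Rmin_glb_lt _ _ _ (Hpos gamma ltac:(lra)) (Hpos s ltac:(lra))). lra.
  - rewrite Hpsi by lra. apply Hpos. lra. }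
apply (RInt_facts_of_continuous_pos _
  (fun t => Rpower (psi t) (alpha - beta) * Rpower (c * (delta - t)) beta)); [lra| |].
- intros z Hz. split.
  + apply (@continuous_mult R_UniformSpace R_AbsRing).
    * apply continuous_Rpower_comp; [apply Hpsi_cont, Hz | apply Hpsi_pos, Hz].
    * apply continuous_Rpower_comp; [|nra].
      apply (@ex_derive_continuous R_AbsRing R_NormedModule). auto_derive. trivial.
  + apply Rmult_lt_0_compat; apply Rpower_gt_0.
- intros t Ht. rewrite <- weight_factorization, Hpsi, Hg by lra. reflexivity.
Qed.

Lemma weighted_mean_le :
  RInt (fun t => t * Rpower (phi t) (alpha - beta) * Rpower (g t) beta) gamma s
    / RInt (fun t => Rpower (phi t) (alpha - beta) * Rpower (g t) beta) gamma s
  <= RInt (fun t => t * Rpower (delta - t) (alpha - beta) * Rpower (g t) beta) gamma s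
    / RInt (fun t => Rpower (delta - t) (alpha - beta) * Rpower (g t) beta) gamma s.
Proof.
rewrite (RInt_ext_open (fun t => t * Rpower (phi t) (alpha - beta) * Rpower (g t) beta)
           (fun t => t * (concavity_factor t * reference_weight t))),
  (RInt_ext_open (fun t => Rpower (phi t) (alpha - beta) * Rpower (g t) beta)
           (fun t => concavity_factor t * reference_weight t)),
  (RInt_ext_open (fun t => t * Rpower (delta - t) (alpha - beta) * Rpower (g t) beta)
           (fun t => t * reference_weight t))
  by (lra || (intros t Ht; rewrite ?Rmult_assoc, ?weight_factorization by lra; reflexivity)).
destruct weighted_facts as [Ihw [Ithw Phw]].
destruct reference_weight_facts as [Iw [Itw Pw]].
apply RInt_barycentre_antitone; try assumption; [lra | |].
- intros x y Hxy Hy. apply concavity_factor_antitone; lra.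
- intros t Ht. apply Rlt_le. change (0 < reference_weight t).
  rewrite reference_weight_eq by lra.
  apply Rmult_lt_0_compat; apply Rpower_gt_0.
Qed.

Lemma reference_mean_eq :
  RInt (fun t => t * Rpower (delta - t) (alpha - beta) * Rpower (g t) beta) gamma s
    / RInt (fun t => Rpower (delta - t) (alpha - beta) * Rpower (g t) beta) gamma s
  = RInt (fun t => t * Rpower (delta - t) alpha) gamma s
    / RInt (fun t => Rpower (delta - t) alpha) gamma s.
Proof.
destruct (dist_power_facts alpha) as [IP [ItP PP]].
rewrite (RInt_ext_open (fun t => t * Rpower (delta - t) (alpha - beta) * Rpower (g t) beta)
           (fun t => Rpower c beta * (t * Rpower (delta - t) alpha))),
  (RInt_ext_open (fun t => Rpower (delta - t) (alpha - beta) * Rpower (g t) beta)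
           (fun t => Rpower c beta * Rpower (delta - t) alpha))
  by (lra || (intros t Ht; pose proof (reference_weight_eq t ltac:(lra)) as E;
              unfold reference_weight in E; rewrite ?Rmult_assoc, E; ring)).
rewrite !(RInt_scal (V := R_CompleteNormedModule)) by assumption.
pose proof (Rpower_gt_0 c beta).
unfold scal; simpl; unfold mult; simpl. field. lra.
Qed.

End Barycentre.

Theorem mainTheorem9 (gamma delta c alpha beta s : R) (g phi : R -> R)
  (Hgd : gamma < delta) (Hc : 0 < c)
  (Hg : forall t, gamma <= t <= delta -> g t = c * (delta - t))
  (Ha : 0 < alpha) (Hab : alpha < beta)
  (Hs : gamma < s < delta)
  (Hnn : forall t, gamma <= t <= delta -> 0 <= phi t)
  (Hconc : concave_on gamma delta phi)
  (Hpos : forall t, gamma <= t <= s -> 0 < phi t) :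
  RInt (fun t => t * Rpower (phi t) (alpha - beta) * Rpower (g t) beta) gamma s
    / RInt (fun t => Rpower (phi t) (alpha - beta) * Rpower (g t) beta) gamma s
  <= RInt (fun t => t * Rpower (delta - t) (alpha - beta) * Rpower (g t) beta) gamma s
    / RInt (fun t => Rpower (delta - t) (alpha - beta) * Rpower (g t) beta) gamma s
  /\
  RInt (fun t => t * Rpower (delta - t) (alpha - beta) * Rpower (g t) beta) gamma s
    / RInt (fun t => Rpower (delta - t) (alpha - beta) * Rpower (g t) beta) gamma s
  = RInt (fun t => t * Rpower (delta - t) alpha) gamma s
    / RInt (fun t => Rpower (delta - t) alpha) gamma s.
Proof.
split.
- exact (weighted_mean_le gamma delta c alpha beta s g phi
    Hc Hg Hab Hs (Hnn delta ltac:(lra)) Hconc Hpos).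
- exact (reference_mean_eq gamma delta c alpha beta s g Hc Hg Hs).
Qed.
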